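(* If $\Gamma$ is a simple, undirected, connected graph of order $p\ge 3$, then $\gamma_{[3R]}(\Gamma)\le \frac{7p}{4}$.
   Context: For a graph $\Gamma=(V,E)$ and $h:V\to\{0,1,2,3,4\}$, let $AN(v)=\{w\in N(v):h(w)\ge 1\}$, $AN[v]=AN(v)\cup\{v\}$ and $h(S)=\sum_{u\in S}h(u)$. $h$ is a triple Roman dominating function (3RDF) if every $v$ with $h(v)<3$ satisfies $h(AN[v])\ge|AN(v)|+3$. The triple Roman domination number $\gamma_{[3R]}(\Gamma)$ is the minimum weight $h(V)$ of a 3RDF of $\Gamma$. *)

From mathcomp Require Import all_boot all_order.
Set Implicit Arguments. Unset Strict Implicit. Unset Printing Implicit Defensive.

Definition simple_graph (T : finType) (e : rel T) : Prop :=
  symmetric e /\ irreflexive e.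

Definition connected_graph (T : finType) (e : rel T) : Prop :=
  forall x y : T, connect e x y.

Section TRD.
Variables (T : finType) (e : rel T).

Definition AN (h : {ffun T -> 'I_5}) (v : T) : {set T} :=
  [set w | e v w & 0 < h w].

Definition weight_on (h : {ffun T -> 'I_5}) (S : {set T}) : nat :=
  \sum_(u in S) (h u : nat).

Definition weight (h : {ffun T -> 'I_5}) : nat := \sum_(u : T) (h u : nat).

Definition is3RDF (h : {ffun T -> 'I_5}) : bool :=
  [forall v, (h v < 3) ==>
     (#|AN h v| + 3 <= weight_on h (v |: AN h v))].

(* gamma_[3R] = minimum weight of a 3RDF; the constant function 4 is always
   a 3RDF (of weight 4|V|), so the default 4|V| never undercuts the minimum. *)
Definition triple_roman_domination_number : nat :=
  \big[minn/ 4 * #|T|]_(h : {ffun T -> 'I_5} | is3RDF h) weight h.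
End TRD.

From mathcomp Require Import all_boot all_order zify.
Set Implicit Arguments. Unset Strict Implicit. Unset Printing Implicit Defensive.
Import Order.TTheory.

(* Choose a root r with two distinct neighbours and layer the graph by the
   distance to r.  For a shift s, give v the value at position
   (dist v + s) mod 4 of the pattern (4,0,3,0) if v has a neighbour in the
   next layer, and of (3,0,3,1) otherwise.  A vertex of value 0 or 1 lies at
   position 1 or 3; its parent, which has a child, carries 4 or 3, and in the
   latter case the vertex either carries 1 itself or has a child carrying at
   least 3.  The root has no parent but two neighbours of value at least 3.
   So all four shifts give 3RDFs; since each pattern sums to 7, their total
   weight is 7|V| and the lightest one weighs at most 7|V|/4. *)

Section Surplus.
Variables (T : finType) (e : rel T).

(* Inactive neighbours contribute [(0).-1 = 0], so this also sums over
   [AN e h v] only. *)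
Definition surplus (h : {ffun T -> 'I_5}) (v : T) : nat :=
  \sum_(w | e v w) (h w).-1.

Lemma weight_on_closed_AN (h : {ffun T -> 'I_5}) v : irreflexive e ->
  weight_on h (v |: AN e h v) = h v + #|AN e h v| + surplus h v.
Proof.
move=> irr_e; rewrite /weight_on big_setU1 ?inE ?irr_e //= -addnA; congr (_ + _).
have -> : surplus h v = \sum_(w in AN e h v) (h w).-1.
  rewrite /surplus (bigID (fun w => 0 < h w)) /= addnC big1 => [|w /andP [_]].
    by apply: eq_bigl => w; rewrite inE.
  by rewrite lt0n negbK => /eqP ->.
rewrite -sum1_card -big_split /=; apply: eq_bigr => w.
by rewrite inE => /andP [_]; case: (h w : nat).
Qed.

Lemma is3RDF_surplus (h : {ffun T -> 'I_5}) : irreflexive e ->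
  (forall v, h v < 3 -> 3 <= h v + surplus h v) -> is3RDF e h.
Proof.
move=> irr_e hs; apply/forallP => v; apply/implyP => /hs.
by rewrite weight_on_closed_AN //; lia.
Qed.

Lemma triple_roman_domination_number_le (h : {ffun T -> 'I_5}) :
  is3RDF e h -> triple_roman_domination_number e <= weight h.
Proof.
rewrite /triple_roman_domination_number -minEnat -leEnat.
exact: bigmin_le_cond.
Qed.

End Surplus.

Lemma leq_muln_sum k m (F : 'I_k -> nat) :
  (forall i, m <= F i) -> k * m <= \sum_(i < k) F i.
Proof.
move=> m_le; rewrite -[k in k * _]card_ord -sum_nat_const.
by apply: leq_sum => i _; exact: m_le.
Qed.

Lemma leq_sum_pair (I : finType) (P : pred I) (F : I -> nat) i j :
  P i -> P j -> i != j -> F i + F j <= \sum_(k | P k) F k.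
Proof.
move=> Pi Pj ij; rewrite (bigD1 i) //= (bigD1 j) /=; last by rewrite Pj eq_sym.
by rewrite addnA leq_addr.
Qed.

Lemma exists_two_neighbours (T : finType) (e : rel T) :
  symmetric e -> connected_graph e -> 2 < #|T| ->
  exists r w1 w2, [/\ w1 != w2, e r w1 & e r w2].
Proof.
move=> sym_e conn_e T_gt2.
have /card_gt1P [x [z [_ _ xz]]] := ltnW T_gt2.
have [y exy] : exists y, e x y.
  have /connectP [[|y p] /= pxp zp] := conn_e x z; first by rewrite zp eqxx in xz.
  by exists y; case/andP: pxp.
case: (pickP (fun w => e x w && (w != y))) => [w /andP [xw wy] | x_only].
  by exists x, y, w; rewrite eq_sym.
case: (pickP (fun w => e y w && (w != x))) => [w /andP [yw wx] | y_only].
  by exists y, x, w; rewrite sym_e eq_sym.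
have closed_xy : closed e [set x; y].
  apply: (intro_closed (sym_connect_sym sym_e)) => u w euw; rewrite !inE.
  case/orP => /eqP eu; [have := x_only w | have := y_only w];
    by rewrite /= -eu euw /= => /negbFE ->; rewrite ?orbT.
have xyT : [set x; y] = setT.
  by apply/setP => v; rewrite in_setT -(closed_connect closed_xy (conn_e x v)) !inE eqxx.
by move: T_gt2; rewrite -cardsT -xyT cards2 ltnS leqNgt ltnS leq_b1.
Qed.

Section Distance.
Variables (T : finType) (e : rel T) (r : T).
Hypothesis reach : forall v, connect e r v.

Definition walk_to (n : nat) (v : T) : bool :=
  [exists p : n.-tuple T, path e r p && (last r p == v)].

Lemma walk_toP n v :
  reflect (exists2 p, size p = n & path e r p && (last r p == v)) (walk_to n v).
Proof.
rewrite /walk_to; apply: (iffP existsP); first by case=> p wp; exists p; rewrite ?size_tuple.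
by case=> p <- wp; exists (in_tuple p).
Qed.

Lemma exists_walk_to v : exists n, walk_to n v.
Proof.
have /connectP [p pp ->] := reach v.
by exists (size p); apply/walk_toP; exists p; rewrite ?pp ?eqxx.
Qed.

Definition dist (v : T) : nat := ex_minn (exists_walk_to v).

Lemma dist_walk_to v : walk_to (dist v) v.
Proof. by rewrite /dist; case: ex_minnP. Qed.

Lemma dist_min n v : walk_to n v -> dist v <= n.
Proof. by rewrite /dist; case: ex_minnP => m _; apply. Qed.

Lemma dist_eq0 v : (dist v == 0) = (v == r).
Proof.
apply/eqP/eqP => [d0 | ->].
  by have := dist_walk_to v; rewrite d0 => /walk_toP [[|//] _ /eqP <-].
by apply/eqP; rewrite -leqn0 dist_min //; apply/walk_toP; exists [::]; rewrite ?eqxx.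
Qed.

Lemma dist_edge u v : e u v -> dist v <= (dist u).+1.
Proof.
move=> euv; apply: dist_min; apply/walk_toP.
have /walk_toP [p <- /andP [pp /eqP lp]] := dist_walk_to u.
exists (rcons p v); first by rewrite size_rcons.
by rewrite rcons_path pp lp euv last_rcons eqxx.
Qed.

Lemma dist_parent v : v != r -> exists2 u, e u v & dist v = (dist u).+1.
Proof.
rewrite -dist_eq0; have := dist_walk_to v.
case dv: (dist v) => [//|n] /walk_toP [p p_n wp] _; move: p_n wp.
case/lastP: p => [//|q w]; rewrite size_rcons rcons_path last_rcons.
move=> [q_n] /andP [/andP [pq eqw] /eqP wv]; subst w.
exists (last r q) => //.
have : dist (last r q) <= n.
  by apply: dist_min; apply/walk_toP; exists q; rewrite ?pq ?eqxx.
have := dist_edge eqw; rewrite dv; lia.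
Qed.

End Distance.

Definition rdf_pattern (has_child : bool) (n : nat) : nat :=
  nth 0 (if has_child then [:: 4; 0; 3; 0] else [:: 3; 0; 3; 1]) (n %% 4).

Lemma rdf_pattern_lt5 b n : rdf_pattern b n < 5.
Proof.
rewrite /rdf_pattern; have := ltn_pmod n (isT : 0 < 4).
by case: (n %% 4) => [|[|[|[|]]]] //; case: b.
Qed.

Lemma rdf_pattern_sum b n : \sum_(s < 4) rdf_pattern b (n + s) = 7.
Proof.
rewrite !big_ord_recr big_ord0 /= /rdf_pattern.
rewrite -!(modnDml n) addn0; have := ltn_pmod n (isT : 0 < 4).
by case: (n %% 4) => [|[|[|[|]]]] //; case: b.
Qed.

Lemma rdf_pattern_next_ge3 b n :
  rdf_pattern true n < 3 -> 3 <= rdf_pattern b n.+1.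
Proof.
rewrite /rdf_pattern -[n.+1]addn1 -(modnDml n 1).
by have := ltn_pmod n (isT : 0 < 4); case: (n %% 4) => [|[|[|[|]]]] //; case: b.
Qed.

Lemma rdf_pattern_parent_child b c n : rdf_pattern b n.+1 < 3 ->
  3 <= rdf_pattern b n.+1 + (rdf_pattern true n).-1
       + (if b then (rdf_pattern c n.+2).-1 else 0).
Proof.
rewrite /rdf_pattern -[n.+2]addn2 -[n.+1]addn1 -(modnDml n 1) -(modnDml n 2).
have := ltn_pmod n (isT : 0 < 4).
by case: (n %% 4) => [|[|[|[|]]]] //; case: b; case: c.
Qed.

Section ShiftedLabelling.
Variables (T : finType) (e : rel T) (r : T).
Hypothesis reach : forall v, connect e r v.
Local Notation d := (dist reach).

Definition has_child (v : T) : bool := [exists w, e v w && (d w == (d v).+1)].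

Definition shifted_labelling (s : nat) : {ffun T -> 'I_5} :=
  [ffun v => inord (rdf_pattern (has_child v) (d v + s))].

Lemma shifted_labellingE s v :
  shifted_labelling s v = rdf_pattern (has_child v) (d v + s) :> nat.
Proof. by rewrite ffunE inordK // rdf_pattern_lt5. Qed.

Lemma sum_weight_shifted_labelling :
  \sum_(s < 4) weight (shifted_labelling s) = 7 * #|T|.
Proof.
rewrite /weight exchange_big /= (eq_bigr (fun=> 7)) => [|v _].
  by rewrite sum_nat_const mulnC.
under eq_bigr do rewrite shifted_labellingE.
exact: rdf_pattern_sum.
Qed.

Hypotheses (sym_e : symmetric e) (irr_e : irreflexive e).
Variables (w1 w2 : T).
Hypotheses (w12 : w1 != w2) (rw1 : e r w1) (rw2 : e r w2).

Lemma dist_root : d r = 0.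
Proof. by apply/eqP; rewrite dist_eq0. Qed.

Lemma dist_root_neighbour w : e r w -> d w = 1.
Proof.
move=> rw; have := dist_edge reach rw; rewrite dist_root.
have : d w != 0 by rewrite dist_eq0; apply: contraTneq rw => ->; rewrite irr_e.
lia.
Qed.

Variable s : nat.
Local Notation h := (shifted_labelling s).

Lemma surplus_root : h r < 3 -> 3 <= h r + surplus e h r.
Proof.
have child_r : has_child r.
  by apply/existsP; exists w1; rewrite rw1 (dist_root_neighbour rw1) dist_root.
move=> hr_lt3; have big_nbr w : e r w -> 3 <= h w.
  move=> rw; move: hr_lt3; rewrite !shifted_labellingE child_r.
  by rewrite (dist_root_neighbour rw) dist_root; exact: rdf_pattern_next_ge3.
have := leq_sum_pair (fun w => (h w).-1) rw1 rw2 w12.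
have := big_nbr _ rw1; have := big_nbr _ rw2; rewrite /surplus; lia.
Qed.

Lemma surplus_off_root v : v != r -> h v < 3 -> 3 <= h v + surplus e h v.
Proof.
move=> vr; have [u euv dv] := dist_parent reach vr.
have child_u : has_child u by apply/existsP; exists v; rewrite euv dv eqxx.
have hu : h u = rdf_pattern true (d u + s) :> nat.
  by rewrite shifted_labellingE child_u.
have hv : h v = rdf_pattern (has_child v) (d u + s).+1 :> nat.
  by rewrite shifted_labellingE dv addSn.
have evu : e v u by rewrite sym_e.
case child_v: (has_child v) hv => hv.
  have /existsP [w /andP [evw /eqP dw]] := child_v.
  have uw : u != w.
    by apply/eqP => uw; move: dw; rewrite -uw dv => /eqP; rewrite ltn_eqF.
  have hw : h w = rdf_pattern (has_child w) (d u + s).+2 :> nat.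
    by rewrite shifted_labellingE dw dv !addSn.
  rewrite hv => /(rdf_pattern_parent_child (has_child w)) /=.
  rewrite -hu -hv -hw -addnA => /leq_trans; apply.
  by rewrite leq_add2l; exact: (leq_sum_pair (fun w => (h w).-1) evu evw uw).
rewrite hv => /(rdf_pattern_parent_child true) /=.
rewrite -hu -hv addn0 => /leq_trans; apply.
by rewrite leq_add2l /surplus (bigD1 u) //= leq_addr.
Qed.

Lemma shifted_labelling_is3RDF : is3RDF e h.
Proof.
apply: is3RDF_surplus => // v; case: (eqVneq v r) => [->|vr].
  exact: surplus_root.
exact: surplus_off_root.
Qed.

End ShiftedLabelling.

Theorem corollary15 (T : finType) (e : rel T) :
  simple_graph e -> connected_graph e -> 3 <= #|T| ->
  4 * triple_roman_domination_number e <= 7 * #|T|.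
Proof.
move=> [sym_e irr_e] conn_e T_gt2.
have [r [w1 [w2 [w12 rw1 rw2]]]] := exists_two_neighbours sym_e conn_e T_gt2.
have reach : forall v, connect e r v := conn_e r.
rewrite -(sum_weight_shifted_labelling reach); apply: leq_muln_sum => s.
apply: triple_roman_domination_number_le.
exact: (shifted_labelling_is3RDF reach sym_e irr_e w12 rw1 rw2).
Qed.
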